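(* Let $q=2^m$ with $m\ge 4$ even. Then the subfield subcode $\mathcal C_{\{3,5\}}^{\perp}|_{\mathrm{GF}(q)}$ has parameters $[q+1,q-3,4]_q$.
   Context: Let $U_{q+1}$ be the set of $(q+1)$-th roots of unity in $\mathrm{GF}(q^2)$; coordinates of vectors of length $q+1$ are indexed by $U_{q+1}$ (in a fixed order). Define the code over $\mathrm{GF}(q^2)$ $\mathcal C_{\{3,5\}}=\{(a_3u^3+a_{q-2}u^{q-2}+a_5u^5+a_{q-4}u^{q-4})_{u\in U_{q+1}}: a_3,a_{q-2},a_5,a_{q-4}\in\mathrm{GF}(q^2)\}$. $\mathcal C_{\{3,5\}}^\perp$ is its dual with respect to the standard inner product $\sum_u c_uw_u$, and $\mathcal C^\perp_{\{3,5\}}|_{\mathrm{GF}(q)}=\mathcal C^\perp_{\{3,5\}}\cap\mathrm{GF}(q)^{q+1}$. $[n,k,d]_q$ denotes a linear code over $\mathrm{GF}(q)$ of length $n$, dimension $k$, minimum distance $d$. *)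

From HB Require Import structures.
From mathcomp Require Import all_boot all_order all_algebra all_field.
Set Implicit Arguments. Unset Strict Implicit. Unset Printing Implicit Defensive.
Import GRing.Theory.
Local Open Scope ring_scope.

Definition Uset (F : finFieldType) (q : nat) : {set F} :=
  [set u : F | u ^+ q.+1 == 1].

(* The code length n = |U_{q+1}|; coordinates indexed by 'I_n via enum_val
   (a fixed order of U_{q+1}). *)
Notation ulen F q := #|Uset F q|.

(* The coordinate of the codeword of C_{3,5} with coefficients
   (a3, a_{q-2}, a5, a_{q-4}) at position u. *)
Definition c35 (F : finFieldType) (q : nat) (a3 aq2 a5 aq4 u : F) : F :=
  a3 * u ^+ 3 + aq2 * u ^+ (q - 2) + a5 * u ^+ 5 + aq4 * u ^+ (q - 4).

(* Subfield subcode C_{3,5}^perp |_{GF(q)}: GF(q) is realized as a finite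
   field K embedded into F by the field morphism iota; a vector over GF(q)
   of length n is a row vector c : 'rV[K]_n, and it lies in the dual of
   C_{3,5} iff sum_u c_u w_u = 0 for every codeword w of C_{3,5}. *)
Definition subcode35 (K F : finFieldType) (iota : {rmorphism K -> F}) (q : nat)
  : {set 'rV[K]_(ulen F q)} :=
  [set c : 'rV[K]_(ulen F q) | [forall a3 : F, forall aq2 : F, forall a5 : F,
     forall aq4 : F,
       \sum_(i < ulen F q) c35 q a3 aq2 a5 aq4 (enum_val i) * iota (c ord0 i)
         == 0]].

Definition wt (K : finFieldType) (n : nat) (c : 'rV[K]_n) : nat :=
  #|[set i : 'I_n | c ord0 i != 0]|.

Definition is_linear_code (K : finFieldType) (n : nat) (C : {set 'rV[K]_n}) :=
  0 \in C /\ forall (a : K) (x y : 'rV[K]_n), x \in C -> y \in C -> a *: x + y \in C.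

Definition code_dim (K : finFieldType) (n : nat) (C : {set 'rV[K]_n}) : nat :=
  \dim <<enum C>>%VS.

Definition min_dist_is (K : finFieldType) (n : nat) (C : {set 'rV[K]_n}) (d : nat) :=
  (exists2 c, c \in C & c != 0 /\ wt c = d) /\
  (forall c, c \in C -> c != 0 -> (d <= wt c)%N).

From HB Require Import structures.
From mathcomp Require Import all_boot all_order all_algebra all_field.
From mathcomp Require Import ring zify.
Set Implicit Arguments. Unset Strict Implicit. Unset Printing Implicit Defensive.
Import GRing.Theory.
Local Open Scope ring_scope.

(* Write F = GF(q^2), view K = GF(q) inside F through iota, and let frob x = x^q.
   On the group U of (q+1)-th roots of unity frob is inversion, so u^(q-2) = frob (u^3) and
   u^(q-4) = frob (u^5); as frob fixes the entries of a vector c over K, c lies in the subcode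
   iff its syndromes S3 c = sum_u c_u u^3 and S5 c = sum_u c_u u^5 vanish.
   The map c |-> (S3 c, S5 c) sends K^(q+1) onto F^2, because the sums over U of u^k vanish
   for 0 < k <= q; hence the code has q^(q+1-4) elements.
   A nonzero codeword of weight at most 3 gives, after applying frob, a vanishing determinant
   with rows u^3, u^-3, u^5 at three distinct points of U.  Up to a unit this determinant is
   the square of t43 u1 u2 u3, which cannot vanish there since cubing is injective on U
   (q = 1 mod 3 as m is even).
   For weight 4, take u in U other than 1 and a primitive cube root of unity om, which lies in
   GF(4) <= GF(q).  Then v = om^2 (u + om) / (u + om^2) lies in U and w' = v + v^-1 satisfies
   w' (w + 1) = w for w = u + u^-1.  Put v^3 + v^-3 on u, u^-1 and u^3 + u^-3 on v, v^-1:
   S3 vanishes by symmetry, and S5 by an identity between the Dickson polynomials D_3, D_5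
   evaluated at w and w'. *)

Lemma card_roots_lt_size (F : finFieldType) (A : {set F}) (p : {poly F}) :
  p != 0 -> {subset A <= root p} -> (#|A| < size p)%N.
Proof.
move=> p0 Ap; rewrite cardE; apply: max_poly_roots => //; last exact: enum_uniq.
by apply/allP => x; rewrite mem_enum => /Ap.
Qed.

Lemma exists_cube_root1 (F : finFieldType) : (3 %| #|F|.-1)%N -> exists2 w : F, w ^+ 3 = 1 & w != 1.
Proof.
case/dvdnP=> k; rewrite -subn1 => Fk; have F_gt1 : (1 < #|F|)%N := finNzRing_gt1 F.
have k_gt0 : (0 < k)%N by lia.
have [x xk] : exists x : F, x ^+ k.+1 != x.
  apply/existsP; rewrite -negb_forall; apply/negP => /forallP xk.
  suff : (#|F| < size ('X^(k.+1) - 'X : {poly F})%R)%N.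
    by rewrite size_polyDl ?size_polyXn ?size_polyN ?size_polyX //; lia.
  rewrite -cardsT; apply: card_roots_lt_size.
    by rewrite -size_poly_eq0 size_polyDl ?size_polyXn ?size_polyN ?size_polyX //; lia.
  by move=> y _; rewrite rootE !hornerE subr_eq0.
have x0 : x != 0 by apply: contraNneq xk => ->; rewrite expr0n.
exists (x ^+ k); last by apply: contraNneq xk; rewrite exprS => ->; rewrite mulr1.
apply: (mulfI x0); rewrite mulr1 -exprM -exprS -Fk subn1 prednK ?expf_card //.
exact: ltnW.
Qed.

Lemma expr_coprime_eq1 (F : fieldType) (x : F) (a b : nat) :
  (0 < a)%N -> coprime a b -> x ^+ a = 1 -> x ^+ b = 1 -> x = 1.
Proof.
move=> a0 /eqP ab1 xa xb; case: (egcdnP b a0) => ka kb; rewrite ab1 => e _.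
have : x ^+ (ka * a) = x ^+ (kb * b + 1) by rewrite e.
by rewrite exprD mulnC (mulnC kb) !exprM xa xb !expr1n mul1r expr1.
Qed.

Lemma card_surj_additive (V W : finZmodType) (f : V -> W) :
  {morph f : x y / x - y} -> (forall w, exists v, f v = w) ->
  #|V| = (#|W| * #|[set v | f v == 0%R]|)%N.
Proof.
move=> fB f_surj; have f0 : f 0 = 0 by rewrite -(subrr 0) fB subrr.
have fN x : f (- x) = - f x by rewrite -sub0r fB f0 sub0r.
have fD x y : f (x + y) = f x + f y by rewrite -[y in LHS]opprK fB fN opprK.
have fiberE w : #|[set v | f v == w]| = #|[set v | f v == 0]|.
  have [v0 <-] := f_surj w.
  rewrite -[RHS](card_imset _ (addrI v0)); apply: eq_card => v; rewrite inE.
  apply/eqP/imsetP => [fv | [k]]; last by rewrite inE => /eqP fk ->; rewrite fD fk addr0.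
  by exists (v - v0); [rewrite inE fB fv subrr | rewrite addrC subrK].
transitivity (\sum_(w : W) #|[set v | f v == w]|)%N.
  rewrite -sum1_card (partition_big f predT) //=; apply: eq_bigr => w _.
  by rewrite -sum1_card; apply: eq_bigl => v; rewrite inE.
by rewrite (eq_bigr _ (fun w _ => fiberE w)) sum_nat_const mulnC.
Qed.

Lemma pad_set_to_triple (T : finType) (S : {set T}) : (#|S| <= 3 <= #|T|)%N ->
  exists s : seq T, [/\ uniq s, size s = 3%N & {subset S <= s}].
Proof.
case/andP=> S_le3 T_ge3; exists (take 3 (enum S ++ enum (~: S))); split.
- rewrite take_uniq // cat_uniq !enum_uniq andbT /=.
  by apply/hasPn => x; rewrite !mem_enum inE.
- by rewrite size_takel // size_cat -!cardE cardsC.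
- by move=> x xS; rewrite take_cat ltnNge -cardE S_le3 mem_cat mem_enum xS.
Qed.

Lemma wt0 (K : finFieldType) (n : nat) : wt (0 : 'rV[K]_n) = 0%N.
Proof. by apply: eq_card0 => i; rewrite inE mxE eqxx. Qed.

Lemma card_linear_code (K : finFieldType) (n : nat) (C : {set 'rV[K]_n}) :
  is_linear_code C -> #|C| = (#|K| ^ code_dim C)%N.
Proof.
move=> [C0 Clin]; rewrite /code_dim -card_vspace.
have spanC s : {subset s <= C} -> {subset <<s>>%VS <= C}.
  elim: s => [_ v | x s IH sC v]; first by rewrite span_nil memv0 => /eqP ->.
  rewrite span_cons => /memv_addP [_ /vlineP [k ->] [w w_s ->]].
  apply: Clin; first by apply: sC; rewrite mem_head.
  by apply: IH => // y ys; apply: sC; rewrite in_cons ys orbT.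
apply: eq_card => v; apply/idP/idP => [vC | /spanC]; first by apply: memv_span; rewrite mem_enum.
by apply => y; rewrite mem_enum.
Qed.

(** * Roots of unity *)

Section RootsOfUnity.
Variables (F : finFieldType) (q : nat).
Local Notation U := (Uset F q).

Lemma Uset_neq0 u : u \in U -> u != 0.
Proof. by rewrite inE; apply: contraTneq => ->; rewrite expr0n eq_sym oner_eq0. Qed.

Lemma Uset1 : 1 \in U. Proof. by rewrite inE expr1n. Qed.

Lemma UsetM u v : u \in U -> v \in U -> u * v \in U.
Proof. by rewrite !inE exprMn => /eqP -> /eqP ->; rewrite mulr1. Qed.

Lemma UsetV u : u \in U -> u^-1 \in U.
Proof. by rewrite !inE exprVn => /eqP ->; rewrite invr1. Qed.

Lemma Uset_expr_inv u j k : u \in U -> (j + k = q.+1)%N -> u ^+ j = u^-1 ^+ k.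
Proof.
move=> Uu jk; have u0 := Uset_neq0 Uu; move: Uu; rewrite inE -jk exprD => /eqP ujk.
by rewrite exprVn -[LHS]mulr1 -(mulfV (expf_neq0 k u0)) mulrA ujk mul1r.
Qed.

Lemma Uset_exprq u : u \in U -> u ^+ q = u^-1.
Proof. by move=> Uu; rewrite (Uset_expr_inv (k := 1) Uu) ?addn1. Qed.

Lemma Uset_expr_inj k u v : (0 < k)%N -> coprime k q.+1 -> u \in U -> v \in U ->
  u ^+ k = v ^+ k -> u = v.
Proof.
move=> k0 kq Uu Uv ukvk; have v0 := Uset_neq0 Uv.
suff : u / v = 1 by move/divr1_eq.
apply: (expr_coprime_eq1 k0 kq); first by rewrite expr_div_n ukvk divff // expf_neq0.
by have := UsetM Uu (UsetV Uv); rewrite inE => /eqP.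
Qed.

Hypotheses (cardF : #|F| = (q * q)%N) (q_gt1 : (1 < q)%N).

Lemma card_Uset : #|U| = q.+1.
Proof.
apply/eqP; rewrite eqn_leq; apply/andP; split.
  rewrite -ltnS -(size_XnsubC (1 : F) (ltn0Sn q)); apply: card_roots_lt_size.
    by rewrite -size_poly_eq0 size_XnsubC.
  by move=> u; rewrite inE rootE !hornerE => /eqP ->; rewrite subrr.
(* x |-> x ^+ q.-1 maps the q * q - 1 units into U, with fibres of size less than q. *)
pose g (x : F) := x ^+ q.-1.
have gU x : x != 0 -> g x \in U.
  move=> x0; rewrite inE /g -exprM; apply/eqP/(mulfI x0).
  by rewrite -exprS mulr1 -[in RHS](expf_card x) cardF; congr (x ^+ _); nia.
have fiber_small c : (#|[set x | g x == c]| <= q.-1)%N.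
  rewrite -ltnS -(size_XnsubC c (_ : 0 < q.-1)%N); last by lia.
  apply: card_roots_lt_size; first by rewrite -size_poly_eq0 size_XnsubC //; lia.
  by move=> x; rewrite inE rootE !hornerE => /eqP <-; rewrite subrr.
have : ((q * q).-1 <= #|U| * q.-1)%N.
  rewrite -cardF -(cardC1 0) -[#|predC1 0|]sum1_card (partition_big g (mem U)) /=.
    rewrite -sum_nat_const; apply: leq_sum => c _; apply: leq_trans (fiber_small c).
    by rewrite !sum1dep_card; apply: subset_leq_card; apply/subsetP => x; rewrite !inE => /andP [].
  by move=> x; apply: gU.
nia.
Qed.

Lemma sum_Uset_expr k : (0 < k <= q)%N -> \sum_(u in U) u ^+ k = 0.
Proof.
move=> /andP [k0 kq].
have [z Uz zk1] : exists2 z, z \in U & z ^+ k != 1.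
  apply/exists_inP; rewrite -negb_forall_in; apply/negP => /forall_inP Uk1.
  suff : (#|U| < size (('X^k - 1)%R : {poly F}))%N by rewrite card_Uset size_XnsubC //; lia.
  apply: card_roots_lt_size; first by rewrite -size_poly_eq0 size_XnsubC.
  by move=> u /Uk1 /eqP uk; rewrite rootE !hornerE uk subrr.
have z0 := Uset_neq0 Uz.
have : \sum_(u in U) u ^+ k = z ^+ k * \sum_(u in U) u ^+ k.
  rewrite mulr_sumr (reindex_inj (mulfI z0)) /=.
  apply: eq_big => [u | u _]; last by rewrite exprMn.
  apply/idP/idP => [Uzu | Uu]; last exact: UsetM.
  by rewrite -[u](mulKf z0); apply: UsetM => //; apply: UsetV.
move/eqP; rewrite -subr_eq0 -{1}[\sum_(u in U) _]mul1r -mulrBl mulf_eq0 subr_eq0.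
by rewrite eq_sym (negbTE zk1) => /eqP.
Qed.

Lemma sum_Uset_exprV k : (0 < k <= q)%N -> \sum_(u in U) u^-1 ^+ k = 0.
Proof.
move=> k_range; rewrite -[RHS](sum_Uset_expr k_range) (reindex_inj invr_inj) /=.
apply: eq_big => [u | u _]; last by rewrite invrK.
by apply/idP/idP => [/UsetV | Uu]; rewrite ?invrK //; apply: UsetV.
Qed.

End RootsOfUnity.

Arguments Uset1 {F q}.

(** * Polynomial identities *)

Section Char2Identities.
Variable R : comNzRingType.
Hypothesis pcharR2 : 2 \in [pchar R].
Let two0 : 2 = 0 :> R := pcharf0 pcharR2.

(* The identities below are proved from explicit certificates: the difference of the two
   sides is a combination of the hypotheses and of a multiple of 2. *)

Lemma sqrrD_pchar2 (x y : R) : (x + y) ^+ 2 = x ^+ 2 + y ^+ 2.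
Proof. ring: two0. Qed.

Definition t43 (u1 u2 u3 : R) :=
  u1 ^+ 4 * u2 ^+ 3 + u2 ^+ 4 * u1 ^+ 3 + u1 ^+ 4 * u3 ^+ 3 + u3 ^+ 4 * u1 ^+ 3
  + u2 ^+ 4 * u3 ^+ 3 + u3 ^+ 4 * u2 ^+ 3.

Lemma t43_add_inv_pchar2 (u1 u2 u3 W1 W2 W3 : R) :
  u1 * W1 = 1 -> u2 * W2 = 1 -> u3 * W3 = 1 ->
  t43 u1 u2 u3 + (u1 * u2) ^+ 4 * u3 ^+ 6 * t43 W1 W2 W3 =
  (u1 + u2) * (u1 * u2 + u3 ^+ 2) * (u1 + u3) ^+ 2 * (u2 + u3) ^+ 2.
Proof.
move=> h1 h2 h3; apply/eqP; rewrite -subr_eq0; apply/eqP.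
transitivity ((u1*W1 - 1) * (u2^+4*u3^+6*W3^+3 + u2^+4*u3^+6*W2^+3 + u1*u2^+4*u3^+6*W3^+4
  + u1*u2^+4*u3^+6*W2^+4 + u1*u2^+4*u3^+6*W1*W3^+3 + u1*u2^+4*u3^+6*W1*W2^+3
  + u1^+2*u2^+4*u3^+6*W1*W3^+4 + u1^+2*u2^+4*u3^+6*W1*W2^+4 + u1^+2*u2^+4*u3^+6*W1^+2*W3^+3
  + u1^+2*u2^+4*u3^+6*W1^+2*W2^+3 + u1^+3*u2^+4*u3^+6*W1^+2*W3^+4 + u1^+3*u2^+4*u3^+6*W1^+2*W2^+4
  + u1^+3*u2^+4*u3^+6*W1^+3*W3^+3 + u1^+3*u2^+4*u3^+6*W1^+3*W2^+3) + (u2*W2 - 1) * (u2*u3^+6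
  + u2^+2*u3^+6*W2 + u2^+3*u3^+6*W2^+2 + u1*u3^+6 + u1*u2*u3^+6*W2 + u1*u2^+2*u3^+6*W2^+2
  + u1*u2^+3*u3^+6*W2^+3 + u1^+4*u3^+6*W3^+3 + u1^+4*u2*u3^+6*W3^+4 + u1^+4*u2*u3^+6*W2*W3^+3
  + u1^+4*u2^+2*u3^+6*W2*W3^+4 + u1^+4*u2^+2*u3^+6*W2^+2*W3^+3 + u1^+4*u2^+3*u3^+6*W2^+2*W3^+4
  + u1^+4*u2^+3*u3^+6*W2^+3*W3^+3) + (u3*W3 - 1) * (u2^+4*u3^+3 + u2^+4*u3^+4*W3 + u2^+4*u3^+5*W3^+2
  + u1*u2^+4*u3^+2 + u1*u2^+4*u3^+3*W3 + u1*u2^+4*u3^+4*W3^+2 + u1*u2^+4*u3^+5*W3^+3 + u1^+4*u3^+3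
  + u1^+4*u3^+4*W3 + u1^+4*u3^+5*W3^+2 + u1^+4*u2*u3^+2 + u1^+4*u2*u3^+3*W3 + u1^+4*u2*u3^+4*W3^+2
  + u1^+4*u2*u3^+5*W3^+3) + 2 * (- u2^+2*u3^+5 + u2^+4*u3^+3 - 2%:R*u1*u2*u3^+5
  - 3%:R*u1*u2^+2*u3^+4 - 2%:R*u1*u2^+3*u3^+3 - u1^+2*u3^+5 - 3%:R*u1^+2*u2*u3^+4
  - 4%:R*u1^+2*u2^+2*u3^+3 - 3%:R*u1^+2*u2^+3*u3^+2 - u1^+2*u2^+4*u3 - 2%:R*u1^+3*u2*u3^+3
  - 3%:R*u1^+3*u2^+2*u3^+2 - 2%:R*u1^+3*u2^+3*u3 + u1^+4*u3^+3 - u1^+4*u2^+2*u3)).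
  rewrite /t43; ring.
by rewrite h1 h2 h3 two0; ring.
Qed.

Lemma t43_sqr_pchar2 (u1 u2 u3 : R) : u1 * u2 = u3 ^+ 2 ->
  t43 u1 u2 u3 = u3 ^+ 3 * (u1 + u2) ^+ 3 * (u1 + u2 + u3).
Proof.
move=> h; apply/eqP; rewrite -subr_eq0; apply/eqP.
transitivity ((u1*u2 - u3^+2) * (- 6%:R*u3^+5 - 2%:R*u2*u3^+4 - 4%:R*u2^+2*u3^+3 - 2%:R*u1*u3^+4
  - 6%:R*u1*u2*u3^+3 + u1*u2^+2*u3^+2 - 4%:R*u1^+2*u3^+3 + u1^+2*u2*u3^+2 + u1^+2*u2^+3
  + u1^+3*u2^+2) + 2 * (- 3%:R*u3^+7 - u2*u3^+6 - 2%:R*u2^+2*u3^+5 - u1*u3^+6 - 2%:R*u1^+2*u3^+5)).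
  rewrite /t43; ring.
by rewrite h two0; ring.
Qed.

(* Characteristic-2 forms of the Dickson polynomials: x^k + x^-k = D_k(x + x^-1). *)
Definition dickson3 (w : R) := w * (w + 1) ^+ 2.
Definition dickson5 (w : R) := w * (w ^+ 2 + w + 1) ^+ 2.

Lemma dickson3_pchar2 (x W : R) : x * W = 1 -> x ^+ 3 + W ^+ 3 = dickson3 (x + W).
Proof.
move=> xW; apply/eqP; rewrite -subr_eq0; apply/eqP.
transitivity ((x*W - 1) * (- 4%:R - 3%:R*W - 3%:R*x) + 2 * (- 2%:R - 2%:R*W - W^+2 - 2%:R*x
  - x^+2)).
  rewrite /dickson3; ring.
by rewrite xW two0; ring.
Qed.

Lemma dickson5_pchar2 (x W : R) : x * W = 1 -> x ^+ 5 + W ^+ 5 = dickson5 (x + W).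
Proof.
move=> xW; apply/eqP; rewrite -subr_eq0; apply/eqP.
transitivity ((x*W - 1) * (- 16%:R - 19%:R*W - 8%:R*W^+2 - 5%:R*W^+3 - 19%:R*x - 12%:R*x*W
  - 10%:R*x*W^+2 - 8%:R*x^+2 - 10%:R*x^+2*W - 5%:R*x^+3) + 2 * (- 8%:R - 10%:R*W - 5%:R*W^+2
  - 4%:R*W^+3 - W^+4 - 10%:R*x - 5%:R*x^+2 - 4%:R*x^+3 - x^+4)).
  rewrite /dickson5; ring.
by rewrite xW two0; ring.
Qed.

Lemma dickson_cross_pchar2 (w w' : R) : w' * (w + 1) = w ->
  dickson3 w' * dickson5 w + dickson3 w * dickson5 w' = 0.
Proof.
move=> ww'.
transitivity ((w' * (w + 1) - w) * (30%:R + 10%:R*w' + 2%:R*w'^+2 - 18%:R*w - 4%:R*w*w'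
  + 2%:R*w*w'^+2 + 2%:R*w*w'^+3 + w*w'^+4 + 18%:R*w^+2 + 14%:R*w^+2*w' + 8%:R*w^+2*w'^+2
  + 3%:R*w^+2*w'^+3 + w^+2*w'^+4 + 2%:R*w^+3*w' + w^+3*w'^+2 + 4%:R*w^+4 + 3%:R*w^+4*w'
  + w^+4*w'^+2) + 2 * (- 15%:R*w' - 5%:R*w'^+2 - w'^+3 + 15%:R*w - 9%:R*w^+2 + 9%:R*w^+3
  + 2%:R*w^+5)).
  rewrite /dickson3 /dickson5; ring.
by rewrite ww' two0; ring.
Qed.

Lemma mobius_trace_pchar2 (om u : R) : om ^+ 2 + om + 1 = 0 ->
  ((om ^+ 2 * (u + om)) ^+ 2 + (u + om ^+ 2) ^+ 2) * (u ^+ 2 + u + 1) =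
  (u ^+ 2 + 1) * (om ^+ 2 * (u + om)) * (u + om ^+ 2).
Proof.
move=> om3; apply/eqP; rewrite -subr_eq0; apply/eqP.
transitivity ((om^+2 + om + 1) * (- 2%:R + 2%:R*om^+2 - 2%:R*om^+3 + om^+4 + 4%:R*u - 2%:R*u*om^+2
  + u*om^+3 + u*om^+4 + u^+2 - u^+2*om + u^+2*om^+2 + u^+2*om^+4 + 5%:R*u^+3 - u^+3*om
  - 2%:R*u^+3*om^+2 + 2%:R*u^+3*om^+3 - u^+4 - u^+4*om + u^+4*om^+2) + 2 * (1 + om - 2%:R*u
  - 2%:R*u*om - 2%:R*u^+3 - 2%:R*u^+3*om + u^+4 + u^+4*om)).
  ring.
by rewrite om3 two0; ring.
Qed.

End Char2Identities.

Lemma rmorph_t43 (R S : comNzRingType) (f : {rmorphism R -> S}) (u1 u2 u3 : R) :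
  f (t43 u1 u2 u3) = t43 (f u1) (f u2) (f u3).
Proof. by rewrite /t43 !rmorphD !(rmorphM f (_ ^+ _)) !rmorphXn. Qed.

Definition det3 (R : comNzRingType) (f g h : R -> R) (u1 u2 u3 : R) :=
  (f u2 * g u3 - f u3 * g u2) * h u1 + (f u3 * g u1 - f u1 * g u3) * h u2
  + (f u1 * g u2 - f u2 * g u1) * h u3.

Lemma det3_cramer (R : comNzRingType) (f g h : R -> R) (a1 a2 a3 u1 u2 u3 : R) :
  a1 * f u1 + a2 * f u2 + a3 * f u3 = 0 -> a1 * g u1 + a2 * g u2 + a3 * g u3 = 0 ->
  a1 * h u1 + a2 * h u2 + a3 * h u3 = 0 -> a1 * det3 f g h u1 u2 u3 = 0.
Proof.
move=> Ef Eg Eh; transitivity ((f u2 * g u3 - f u3 * g u2) * (a1 * h u1 + a2 * h u2 + a3 * h u3)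
  + h u2 * (f u3 * (a1 * g u1 + a2 * g u2 + a3 * g u3) - g u3 * (a1 * f u1 + a2 * f u2 + a3 * f u3))
  - h u3 * (f u2 * (a1 * g u1 + a2 * g u2 + a3 * g u3) - g u2 * (a1 * f u1 + a2 * f u2 + a3
    * f u3))).
  by rewrite /det3; ring.
by rewrite Ef Eg Eh; ring.
Qed.

Lemma det3_t43_pchar2 (F : fieldType) (u1 u2 u3 : F) : 2 \in [pchar F] ->
  u1 != 0 -> u2 != 0 -> u3 != 0 ->
  (u1 * u2 * u3) ^+ 3 * det3 (fun u => u ^+ 3) (fun u => u^-1 ^+ 3) (fun u => u ^+ 5) u1 u2 u3
  = t43 u1 u2 u3 ^+ 2.
Proof.
move=> /pcharf0 two0 /mulfV e1 /mulfV e2 /mulfV e3; rewrite /det3 /t43.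
move: (u1^-1) (u2^-1) (u3^-1) e1 e2 e3 => W1 W2 W3 e1 e2 e3.
apply/eqP; rewrite -subr_eq0; apply/eqP.
transitivity ((u1*W1 - 1) * (- u2^+6*u3^+8 + u2^+8*u3^+6 - u1*u2^+6*u3^+8*W1 + u1*u2^+8*u3^+6*W1
  - u1^+2*u2^+6*u3^+8*W1^+2 + u1^+2*u2^+8*u3^+6*W1^+2) + (u2*W2 - 1) * (u1^+6*u3^+8
  + u1^+6*u2*u3^+8*W2 + u1^+6*u2^+2*u3^+8*W2^+2 - u1^+8*u3^+6 - u1^+8*u2*u3^+6*W2
  - u1^+8*u2^+2*u3^+6*W2^+2) + (u3*W3 - 1) * (- u1^+6*u2^+8 - u1^+6*u2^+8*u3*W3
  - u1^+6*u2^+8*u3^+2*W3^+2 + u1^+8*u2^+6 + u1^+8*u2^+6*u3*W3 + u1^+8*u2^+6*u3^+2*W3^+2) + 2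
  * (- u2^+6*u3^+8 - u2^+7*u3^+7 - u1^+3*u2^+3*u3^+8 - u1^+3*u2^+4*u3^+7 - u1^+3*u2^+7*u3^+4
  - u1^+3*u2^+8*u3^+3 - u1^+4*u2^+3*u3^+7 - u1^+4*u2^+4*u3^+6 - u1^+4*u2^+6*u3^+4
  - u1^+4*u2^+7*u3^+3 - u1^+6*u2^+4*u3^+4 - u1^+6*u2^+8 - u1^+7*u3^+7 - u1^+7*u2^+3*u3^+4
  - u1^+7*u2^+4*u3^+3 - u1^+7*u2^+7 - u1^+8*u3^+6 - u1^+8*u2^+3*u3^+3)).
  ring.
by rewrite e1 e2 e3 two0; ring.
Qed.

Definition mobius (F : fieldType) (om u : F) := om ^+ 2 * (u + om) / (u + om ^+ 2).

Lemma mobius_norm (R : comNzRingType) (om u W : R) : u * W = 1 -> om ^+ 2 + om + 1 = 0 ->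
  om ^+ 2 * (W + om) * (om ^+ 2 * (u + om)) = (W + om ^+ 2) * (u + om ^+ 2).
Proof.
move=> uW om3; apply/eqP; rewrite -subr_eq0; apply/eqP.
transitivity ((u*W - 1) * (- 1 + om^+4) + (om^+2 + om + 1) * (- 1 + om - om^+3 + om^+4 - W*om^+2
  + W*om^+3 - u*om^+2 + u*om^+3)).
  ring.
by rewrite uW om3; ring.
Qed.

Lemma notin_inv_pair (F : fieldType) (x y : F) : x + x^-1 != y + y^-1 -> x \notin [:: y; y^-1].
Proof.
move=> xy; rewrite !inE negb_or.
by apply/andP; split; apply: contra xy => /eqP ->; rewrite ?invrK 1?addrC.
Qed.

Lemma neq_inv_pchar2 (F : fieldType) (x : F) : 2 \in [pchar F] -> x + x^-1 != 0 -> x != x^-1.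
Proof. by move=> pcharF2; apply: contra => /eqP <-; rewrite addrr_pchar2. Qed.

Lemma addr_inv_eq0_pchar2 (F : fieldType) (x : F) : 2 \in [pchar F] -> x != 0 ->
  (x + x^-1 == 0) = (x == 1).
Proof.
move=> pcharF2 x0; rewrite addr_eq0 oppr_pchar2 // -(inj_eq (mulIf x0)) mulVf //.
rewrite -subr_eq0 oppr_pchar2 // -[1 in LHS](expr1n _ 2) -expr2 -sqrrD_pchar2 //.
by rewrite expf_eq0 /= addr_eq0 oppr_pchar2.
Qed.

(** * The subfield subcode *)

Section SubfieldSubcode.
Variables (m : nat) (K F : finFieldType) (iota : {rmorphism K -> F}).
Hypotheses (cardK : #|K| = (2 ^ m)%N) (cardF : #|F| = (2 ^ m * 2 ^ m)%N).
Local Notation q := (2 ^ m)%N.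
Local Notation U := (Uset F q).
Local Notation C := (subcode35 iota q).
Implicit Types c : 'rV[K]_#|U|.

Lemma pchar2F : 2 \in [pchar F].
Proof. by apply: (card_finPcharP (n := m + m)); rewrite // expnD. Qed.

Local Notation oppr2 := (oppr_pchar2 pchar2F).

Definition frob (x : F) := x ^+ q.

Lemma frob_is_nmod_morphism : nmod_morphism frob.
Proof.
split=> [|x y]; first by rewrite /frob expr0n expn_eq0.
by apply: exprDn_pchar; rewrite pnatX (pnatE _ (isT : prime 2)) pchar2F.
Qed.

HB.instance Definition _ := GRing.isNmodMorphism.Build F F frob frob_is_nmod_morphism.

Lemma frob_is_monoid_morphism : monoid_morphism frob.
Proof. by split=> [|x y]; [exact: expr1n | exact: exprMn]. Qed.

HB.instance Definition _ := GRing.isMonoidMorphism.Build F F frob frob_is_monoid_morphism.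

Lemma frobK : involutive frob.
Proof. by move=> x; rewrite /frob -exprM -cardF expf_card. Qed.

Lemma frob_iota k : frob (iota k) = iota k.
Proof. by rewrite /frob -rmorphXn -cardK expf_card. Qed.

Lemma frob_Uset u : u \in U -> frob u = u^-1.
Proof. exact: Uset_exprq. Qed.

Lemma frob_UsetX u k : u \in U -> frob (u ^+ k) = u^-1 ^+ k.
Proof. by move=> Uu; rewrite /frob -exprM mulnC exprM (Uset_exprq Uu). Qed.

Lemma frob_UsetVX u k : u \in U -> frob (u^-1 ^+ k) = u ^+ k.
Proof. by move=> Uu; rewrite exprVn fmorphV /= (frob_UsetX _ Uu) exprVn invrK. Qed.

Lemma q_gt1 : (1 < q)%N.
Proof. by rewrite -cardK finNzRing_gt1. Qed.

(* 0 outside the image of iota. *)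
Definition iota_inv (x : F) : K := odflt 0 [pick k | iota k == x].

Lemma iota_invK x : frob x = x -> iota (iota_inv x) = x.
Proof.
rewrite /iota_inv => fx; case: pickP => [k /eqP // | iota_neq_x].
suff : (#|x |: [set iota k | k in K]| < size ('X^q - 'X : {poly F})%R)%N.
  rewrite cardsU1 card_imset ?cardK; last exact: fmorph_inj.
  rewrite size_polyDl ?size_polyXn ?size_polyN ?size_polyX ?ltnS ?q_gt1 //.
  by case: imsetP => [[k _ /esym/eqP] | _]; rewrite ?iota_neq_x ?ltnn.
apply: card_roots_lt_size.
  by rewrite -size_poly_eq0 size_polyDl ?size_polyXn ?size_polyN ?size_polyX ?ltnS ?q_gt1.
move=> y; rewrite !inE rootE !hornerE => /predU1P [-> | /imsetP [k _ ->]].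
  by rewrite -/(frob x) fx subrr.
by rewrite -/(frob (iota k)) frob_iota subrr.
Qed.

Definition syndrome c (h : F -> F) :=
  \sum_(i < #|U|) iota (c ord0 i) * h (enum_val i).

Local Notation S3 c := (syndrome c (fun u => u ^+ 3)).
Local Notation S5 c := (syndrome c (fun u => u ^+ 5)).

Lemma frob_syndrome c k :
  frob (syndrome c (fun u => u ^+ k)) = syndrome c (fun u => u^-1 ^+ k).
Proof.
rewrite rmorph_sum; apply: eq_bigr => i _.
by rewrite rmorphM /= frob_iota frob_UsetX ?enum_valP.
Qed.

Lemma syndromeZD a c c' h : syndrome (a *: c + c') h = iota a * syndrome c h + syndrome c' h.
Proof.
rewrite /syndrome mulr_sumr -big_split; apply: eq_bigr => i _.
by rewrite !mxE rmorphD rmorphM mulrDl mulrA.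
Qed.

Lemma syndrome0 h : syndrome 0 h = 0.
Proof. by rewrite /syndrome big1 // => i _; rewrite mxE rmorph0 mul0r. Qed.

Lemma syndromeB c c' h : syndrome (c - c') h = syndrome c h - syndrome c' h.
Proof. by rewrite -scaleN1r addrC syndromeZD rmorphN1 mulN1r addrC. Qed.

Lemma syndrome_row (g : F -> K) h :
  syndrome (\row_i g (enum_val i)) h = \sum_(u in U) iota (g u) * h u.
Proof. by rewrite [RHS]big_enum_val; apply: eq_bigr => i _; rewrite mxE. Qed.

Lemma syndrome_row_seq (g : F -> K) (s : seq F) h : uniq s -> {subset s <= U} ->
  (forall x, x \notin s -> g x = 0) ->
  syndrome (\row_i g (enum_val i)) h = \sum_(x <- s) iota (g x) * h x.
Proof.
move=> s_uniq sU g0; rewrite syndrome_row (bigID (mem s)) /= [X in _ + X]big1 ?addr0.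
  by rewrite big_uniq //; apply: eq_bigl => x; rewrite andb_idl //; apply: sU.
by move=> x /andP [_ /g0 ->]; rewrite rmorph0 mul0r.
Qed.

Lemma wt_row_seq (g : F -> K) (s : seq F) : uniq s -> {subset s <= U} ->
  (forall x, (g x != 0) = (x \in s)) -> wt (\row_i g (enum_val i) : 'rV[K]_#|U|) = size s.
Proof.
move=> s_uniq sU gs; rewrite /wt -(card_uniqP s_uniq) -(card_imset _ enum_val_inj).
apply: eq_card => x; apply/imsetP/idP => [[i] | xs].
  by rewrite inE mxE gs => ? ->.
by exists (enum_rank_in (sU x xs) x); rewrite ?inE ?mxE ?gs enum_rankK_in // sU.
Qed.

Hypothesis m_ge4 : (4 <= m)%N.

Lemma q_ge16 : (16 <= q)%N.
Proof. by rewrite -[16%N]/(2 ^ 4)%N leq_exp2l. Qed.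

Lemma sum_c35E c a3 aq2 a5 aq4 :
  \sum_(i < #|U|) c35 q a3 aq2 a5 aq4 (enum_val i) * iota (c ord0 i) =
  a3 * S3 c + aq2 * frob (S3 c) + a5 * S5 c + aq4 * frob (S5 c).
Proof.
rewrite !frob_syndrome /syndrome !mulr_sumr -!big_split; apply: eq_bigr => i _.
have Uu := enum_valP i; have q16 := q_ge16.
rewrite /c35 (Uset_expr_inv (j := q - 2) (k := 3) Uu)
  ?(Uset_expr_inv (j := q - 4) (k := 5) Uu) /=; try lia.
ring.
Qed.

Lemma subcode35E c : (c \in C) = (S3 c == 0) && (S5 c == 0).
Proof.
rewrite inE; apply/forallP/andP => [inC | [/eqP S3c /eqP S5c] a3].
  have := inC 1 => /forallP/(_ 0)/forallP/(_ 0)/forallP/(_ 0).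
  have := inC 0 => /forallP/(_ 0)/forallP/(_ 1)/forallP/(_ 0).
  by rewrite !sum_c35E !mul0r !mul1r !add0r !addr0.
by do 3!apply/forallP => ?; rewrite sum_c35E S3c S5c rmorph0 !mulr0 !addr0.
Qed.

Lemma subcode35_linear : is_linear_code C.
Proof.
split; first by rewrite subcode35E !syndrome0 eqxx.
move=> a c c'; rewrite !subcode35E => /andP [/eqP S3c /eqP S5c] /andP [/eqP S3c' /eqP S5c'].
by rewrite !syndromeZD S3c S5c S3c' S5c' mulr0 addr0 eqxx.
Qed.

Lemma sum_Uset1 : \sum_(u in U) 1 = 1 :> F.
Proof.
rewrite sumr_const card_Uset ?q_gt1 // mulrS -[m]prednK ?expnS ?mulrnA; last lia.
by rewrite (pcharf0 pchar2F) mul0rn addr0.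
Qed.

Lemma syndrome35_surj ga de : exists c, S3 c = ga /\ S5 c = de.
Proof.
(* c_u = z u + frob (z u): the power sums over U kill every term but the constant ones. *)
pose z u := ga * u^-1 ^+ 3 + de * u^-1 ^+ 5.
pose g u := iota_inv (z u + frob (z u)).
have gE u : u \in U ->
    iota (g u) = ga * u^-1 ^+ 3 + de * u^-1 ^+ 5 + frob ga * u ^+ 3 + frob de * u ^+ 5.
  move=> Uu; rewrite iota_invK; last by rewrite rmorphD /= frobK addrC.
  by rewrite /z rmorphD /= (rmorphM frob ga) (rmorphM frob de) /= !frob_UsetVX // addrA.
have q16 := q_ge16; have sU := sum_Uset_expr cardF q_gt1.
have sUV := sum_Uset_exprV cardF q_gt1.
exists (\row_i g (enum_val i)); rewrite !syndrome_row; split.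
  rewrite (eq_bigr (fun u => ga * 1 + de * u^-1 ^+ 2 + frob ga * u ^+ 6 + frob de * u ^+ 8)).
    by rewrite !big_split /= -!mulr_sumr sum_Uset1 sUV ?sU //; try lia; rewrite !mulr0 !addr0 mulr1.
  move=> u Uu; rewrite gE // !exprVn; field; exact: Uset_neq0 Uu.
rewrite (eq_bigr (fun u => ga * u ^+ 2 + de * 1 + frob ga * u ^+ 8 + frob de * u ^+ 10)).
  by rewrite !big_split /= -!mulr_sumr sum_Uset1 ?sU //; try lia; rewrite !mulr0 !addr0 add0r mulr1.
move=> u Uu; rewrite gE // !exprVn; field; exact: Uset_neq0 Uu.
Qed.

(* Declares the join of the existing finType and zmodType instances on F * F. *)
HB.instance Definition _ := GRing.Zmodule.on (F * F)%type.

Lemma dim_subcode35 : code_dim C = (q - 3)%N.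
Proof.
have syndrome_morph : {morph (fun c => (S3 c, S5 c)) : c c' / c - c'}.
  by move=> c c'; rewrite !syndromeB.
have syndrome_onto (w : F * F) : exists c, (S3 c, S5 c) = w.
  by case: w => ga de; have [c [S3c S5c]] := syndrome35_surj ga de; exists c; rewrite S3c S5c.
have := card_surj_additive syndrome_morph syndrome_onto.
have -> : [set c | (S3 c, S5 c) == 0] = C.
  by apply/setP => c; rewrite inE subcode35E xpair_eqE.
rewrite (card_linear_code subcode35_linear) card_mx card_prod cardF cardK mul1n.
move: (code_dim C) => d; rewrite card_Uset ?q_gt1 // (_ : q * q * (q * q) = q ^ 4)%N.
  by rewrite -expnD => /eqP; rewrite eqn_exp2l ?q_gt1 // => /eqP; lia.
by rewrite !expnS expn0 muln1 !mulnA.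
Qed.

Hypothesis m_even : ~~ odd m.

Lemma q_mod3 : (q %% 3 = 1)%N.
Proof.
have [k ->] : exists k, m = (2 * k)%N.
  by exists m./2; rewrite mul2n -[LHS]odd_double_half (negbTE m_even).
by rewrite expnM -modnXm exp1n.
Qed.

Lemma coprime6_qS : coprime 6 q.+1.
Proof.
rewrite -[6%N]/(2 * 3)%N coprimeMl coprime2n -coprime_modr -addn1 -modnDml q_mod3 andbT.
by rewrite addn1 /= oddX orbF; lia.
Qed.

Lemma Uset_expr_inj_dvd6 k u v : (0 < k)%N -> (k %| 6)%N -> u \in U -> v \in U ->
  u ^+ k = v ^+ k -> u = v.
Proof. by move=> k0 k6; apply: Uset_expr_inj k0 (coprime_dvdl k6 coprime6_qS). Qed.

Lemma Uset_cube_sum_neq0 x : x \in U -> x != 1 -> x ^+ 3 + x^-1 ^+ 3 != 0.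
Proof.
move=> Ux x1; apply: contraNneq x1 => /eqP; rewrite addr_eq0 oppr2 => /eqP x3.
apply/eqP; apply: (@Uset_expr_inj_dvd6 6 _ _ isT isT Ux Uset1).
by rewrite -[6%N]/(3 + 3)%N exprD {2}x3 -exprMn mulfV ?expr1n //; exact: Uset_neq0 Ux.
Qed.

Lemma t43_neq0 u1 u2 u3 : u1 \in U -> u2 \in U -> u3 \in U ->
  u1 != u2 -> u1 != u3 -> u2 != u3 -> t43 u1 u2 u3 != 0.
Proof.
(* If t43 vanished, so would its frob image t43 at the inverses; the two identities for t43
   then force u1 * u2 = u3 ^+ 2 and u1 + u2 = u3, hence u1 ^+ 3 = u2 ^+ 3. *)
move=> U1 U2 U3 u12 u13 u23; apply/eqP => T0.
have T0' : t43 u1^-1 u2^-1 u3^-1 = 0.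
  by rewrite -(frob_Uset U1) -(frob_Uset U2) -(frob_Uset U3) -rmorph_t43 T0 rmorph0.
have /eqP := t43_add_inv_pchar2 pchar2F (mulfV (Uset_neq0 U1)) (mulfV (Uset_neq0 U2))
  (mulfV (Uset_neq0 U3)).
rewrite T0 T0' mulr0 addr0 eq_sym !mulf_eq0 !addr_eq0 !oppr2.
rewrite (negbTE u12) (negbTE u13) (negbTE u23) /= !orbF => /eqP u12_u3.
move/eqP: T0; rewrite (t43_sqr_pchar2 pchar2F u12_u3) !mulf_eq0 (negbTE (Uset_neq0 U3)).
rewrite !addr_eq0 !oppr2 (negbTE u12) /= => /eqP u12_sum.
apply/negP: u12; apply/negPn/eqP/(@Uset_expr_inj_dvd6 3) => //.
apply/eqP; rewrite -subr_eq0; apply/eqP.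
transitivity ((u1 - u2) * ((u1 + u2) ^+ 2 - u1 * u2)); first ring.
by rewrite u12_sum u12_u3 subrr mulr0.
Qed.

Lemma syndrome_three_points_eq0 a1 a2 a3 u1 u2 u3 :
  frob a1 = a1 -> frob a2 = a2 -> frob a3 = a3 ->
  u1 \in U -> u2 \in U -> u3 \in U -> u1 != u2 -> u1 != u3 -> u2 != u3 ->
  a1 * u1 ^+ 3 + a2 * u2 ^+ 3 + a3 * u3 ^+ 3 = 0 ->
  a1 * u1 ^+ 5 + a2 * u2 ^+ 5 + a3 * u3 ^+ 5 = 0 -> a1 = 0.
Proof.
move=> f1 f2 f3 U1 U2 U3 u12 u13 u23 E3 E5.
have E3V : a1 * u1^-1 ^+ 3 + a2 * u2^-1 ^+ 3 + a3 * u3^-1 ^+ 3 = 0.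
  move/(congr1 frob): E3; rewrite rmorph0 !rmorphD /=.
  by rewrite (rmorphM frob a1) (rmorphM frob a2) (rmorphM frob a3) /= f1 f2 f3 !frob_UsetX.
have := det3_cramer (f := fun u => u ^+ 3) (g := fun u => u^-1 ^+ 3) (h := fun u => u ^+ 5)
  E3 E3V E5.
move/eqP; rewrite mulf_eq0 => /orP [/eqP // | det0]; exfalso.
have := det3_t43_pchar2 pchar2F (Uset_neq0 U1) (Uset_neq0 U2) (Uset_neq0 U3).
rewrite (eqP det0) mulr0 => /esym/eqP.
by rewrite expf_eq0 /= (negbTE (t43_neq0 U1 U2 U3 u12 u13 u23)).
Qed.

Lemma wt_subcode35_ge4 c : c \in C -> c != 0 -> (4 <= wt c)%N.
Proof.
rewrite subcode35E => /andP [/eqP S3c /eqP S5c] c0; rewrite leqNgt; apply: contra c0 => wt_le3.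
have [s [s_uniq s_size Ss]] :
    exists s, [/\ uniq s, size s = 3%N & {subset [set i | c ord0 i != 0] <= s}].
  apply: pad_set_to_triple; rewrite -ltnS wt_le3 card_ord card_Uset ?q_gt1 //=.
  by have := q_ge16; lia.
have c_out i : i \notin s -> c ord0 i = 0.
  by apply: contraNeq => ci; apply: Ss; rewrite inE.
have sumE h : syndrome c h = \sum_(i <- s) iota (c ord0 i) * h (enum_val i).
  rewrite /syndrome (bigID (mem s)) /= [X in _ + X]big1 ?addr0 ?big_uniq // => i /c_out ->.
  by rewrite rmorph0 mul0r.
case: s s_uniq s_size c_out sumE {Ss} => [|i1 [|i2 [|i3 []]]] // s_uniq _ c_out sumE.
move: S3c S5c; rewrite !sumE !big_cons !big_nil !addr0 !addrA => S3c S5c.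
move: s_uniq; rewrite /= !inE !negb_or andbT => /andP [/andP [i12 i13] i23].
have neq (i j : 'I_#|U|) : i != j -> enum_val i != enum_val j by rewrite (inj_eq enum_val_inj).
have := enum_valP i1; have := enum_valP i2; have := enum_valP i3 => U3 U2 U1.
have f i := frob_iota (c ord0 i).
have rot (x1 x2 x3 : F) : x1 + x2 + x3 = x2 + x3 + x1 by rewrite -addrA addrC.
have c1 := syndrome_three_points_eq0 (f i1) (f i2) (f i3) U1 U2 U3
  (neq _ _ i12) (neq _ _ i13) (neq _ _ i23) S3c S5c.
have S3c' := etrans (esym (rot _ _ _)) S3c; have S5c' := etrans (esym (rot _ _ _)) S5c.
have [i21 i31 i32] : [/\ i2 != i1, i3 != i1 & i3 != i2] by rewrite (eq_sym i2) !(eq_sym i3); split.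
have c2 := syndrome_three_points_eq0 (f i2) (f i3) (f i1) U2 U3 U1
  (neq _ _ i23) (neq _ _ i21) (neq _ _ i31) S3c' S5c'.
have S3c'' := etrans (esym (rot _ _ _)) S3c'; have S5c'' := etrans (esym (rot _ _ _)) S5c'.
have c3 := syndrome_three_points_eq0 (f i3) (f i1) (f i2) U3 U1 U2
  (neq _ _ i31) (neq _ _ i32) (neq _ _ i12) S3c'' S5c''.
apply/eqP/rowP => j; rewrite mxE; apply: (fmorph_inj iota); rewrite rmorph0.
case: (boolP (j \in [:: i1; i2; i3])) => [| /c_out -> //]; last exact: rmorph0.
by rewrite !inE => /or3P [] /eqP ->.
Qed.

Lemma cube_root1_frob : exists om, [/\ om ^+ 2 + om + 1 = 0, frob om = om & om ^+ 2 \notin U].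
Proof.
have [j qj] : exists j, q = (3 * j).+1.
  by exists (q %/ 3)%N; rewrite {1}(divn_eq q 3) q_mod3 addn1 mulnC.
have [om om3 om1] : exists2 om : F, om ^+ 3 = 1 & om != 1.
  by apply: exists_cube_root1; rewrite cardF qj; apply/dvdnP; exists (3 * j * j + 2 * j)%N; nia.
exists om; split.
- have om1' : om - 1 != 0 by rewrite subr_eq0.
  apply: (mulfI om1'); rewrite mulr0; transitivity (om ^+ 3 - 1); first ring.
  by rewrite om3 subrr.
- by rewrite /frob qj exprS exprM om3 expr1n mulr1.
- apply: contra om1 => Uom2; have om2 : om ^+ 2 = 1.
    apply: (@Uset_expr_inj_dvd6 3 _ _ isT isT Uom2 Uset1).
    by rewrite -exprM mulnC exprM om3 !expr1n.
  by rewrite -[om]mul1r -{1}om2 -exprSr om3.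
Qed.

Section Mobius.
Variable om : F.
Hypotheses (om_root : om ^+ 2 + om + 1 = 0) (om_frob : frob om = om) (om2_U : om ^+ 2 \notin U).

Lemma Uset_add_om2_neq0 u : u \in U -> u + om ^+ 2 != 0.
Proof. by move=> Uu; rewrite addr_eq0 oppr2; apply: contraNneq om2_U => <-. Qed.

Lemma mobius_Uset u : u \in U -> mobius om u \in U.
Proof.
move=> Uu; have D0 := Uset_add_om2_neq0 Uu; have D'0 := Uset_add_om2_neq0 (UsetV Uu).
rewrite inE exprSr -/(frob _) /mobius fmorph_div rmorphM !rmorphD !rmorphXn /= om_frob frob_Uset //.
by rewrite mulf_div (mobius_norm (mulfV (Uset_neq0 Uu)) om_root) divff ?mulf_neq0.
Qed.

Lemma mobius_trace u : u \in U ->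
  let v := mobius om u in (v + v^-1) * (u + u^-1 + 1) = u + u^-1.
Proof.
move=> Uu /=; have u0 := Uset_neq0 Uu; have D0 := Uset_add_om2_neq0 Uu.
have N0 : om ^+ 2 * (u + om) != 0.
  by have := Uset_neq0 (mobius_Uset Uu); rewrite /mobius mulf_eq0 negb_or => /andP [].
apply/eqP; rewrite -subr_eq0; apply/eqP; rewrite /mobius invf_div.
have num := mobius_trace_pchar2 pchar2F u om_root.
move: (om ^+ 2 * (u + om)) (u + om ^+ 2) N0 D0 num => N D N0 D0 num.
transitivity (((N ^+ 2 + D ^+ 2) * (u ^+ 2 + u + 1) - (u ^+ 2 + 1) * N * D) / (N * D * u)).
  by field; rewrite N0 D0 u0.
by rewrite num subrr mul0r.
Qed.

End Mobius.

Lemma inv_pairs_codeword u v a b : u \in U -> v \in U -> uniq [:: u; u^-1; v; v^-1] ->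
  frob a = a -> frob b = b -> a != 0 -> b != 0 ->
  a * (u ^+ 3 + u^-1 ^+ 3) + b * (v ^+ 3 + v^-1 ^+ 3) = 0 ->
  a * (u ^+ 5 + u^-1 ^+ 5) + b * (v ^+ 5 + v^-1 ^+ 5) = 0 ->
  exists2 c, c \in C & c != 0 /\ wt c = 4%N.
Proof.
move=> Uu Uv s_uniq fa fb a0 b0 E3 E5.
have [vu v'u] : v \notin [:: u; u^-1] /\ v^-1 \notin [:: u; u^-1].
  move: s_uniq; rewrite /= !inE !negb_or !andbT => /and3P [/and3P [_ uv uv'] /andP [u'v u'v'] _].
  by rewrite !(eq_sym v) !(eq_sym v^-1) uv uv' u'v u'v'.
pose g x := if x \in [:: u; u^-1] then iota_inv a else if x \in [:: v; v^-1] then iota_inv b else 0.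
have [ga gb] : iota (iota_inv a) = a /\ iota (iota_inv b) = b by rewrite !iota_invK.
have gs x : (g x != 0) = (x \in [:: u; u^-1; v; v^-1]).
  have [a'0 b'0] : iota_inv a != 0 /\ iota_inv b != 0 by rewrite -!(fmorph_eq0 iota) ga gb.
  rewrite -[[:: u; _; _; _]]/([:: u; u^-1] ++ [:: v; v^-1]) mem_cat /g.
  by case: ifP => _; [| case: ifP => _]; rewrite ?a'0 ?b'0 ?eqxx.
have sU : {subset [:: u; u^-1; v; v^-1] <= U} by apply/allP; rewrite /= Uu Uv !UsetV.
have g0 x : x \notin [:: u; u^-1; v; v^-1] -> g x = 0 by rewrite -gs negbK => /eqP.
have [gu gu' gv gv'] : [/\ iota (g u) = a, iota (g u^-1) = a, iota (g v) = b & iota (g v^-1) = b].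
  by rewrite /g (negbTE vu) (negbTE v'u) !inE !eqxx ?orbT.
exists (\row_i g (enum_val i)).
  rewrite subcode35E !(syndrome_row_seq _ s_uniq sU g0) !big_cons !big_nil gu gu' gv gv' !addr0.
  by rewrite !addrA -!mulrDr -!addrA -!mulrDr E3 E5 eqxx.
have wt4 := wt_row_seq s_uniq sU gs; split=> //.
by apply/eqP => c0; move: wt4; rewrite c0 wt0.
Qed.

Lemma weight4_codeword_of u v : u \in U -> v \in U -> u != 1 ->
  (v + v^-1) * (u + u^-1 + 1) = u + u^-1 -> exists2 c, c \in C & c != 0 /\ wt c = 4%N.
Proof.
move=> Uu Uv u1 trace; pose w (x : F) := x + x^-1.
have w0 x : x \in U -> (w x == 0) = (x == 1).
  by move=> Ux; apply: addr_inv_eq0_pchar2 pchar2F (Uset_neq0 Ux).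
have wu0 : w u != 0 by rewrite w0.
have wv0 : w v != 0 by apply: contraNneq wu0; rewrite /w -trace => ->; rewrite mul0r.
have wvu : w v != w u.
  apply: contraNneq wu0 => e; move/eqP: trace; rewrite -/(w v) -/(w u) e.
  by rewrite mulrDr mulr1 -subr_eq0 addrK mulf_eq0 orbb.
have uv : u \notin [:: v; v^-1] by apply: notin_inv_pair; rewrite eq_sym.
have u'v : u^-1 \notin [:: v; v^-1] by apply: notin_inv_pair; rewrite invrK addrC eq_sym.
have s_uniq : uniq [:: u; u^-1; v; v^-1].
  by rewrite /= in_cons negb_or neq_inv_pchar2 ?pchar2F // uv u'v inE neq_inv_pchar2 ?pchar2F.
have frob_sum x k : x \in U -> frob (x ^+ k + x^-1 ^+ k) = x ^+ k + x^-1 ^+ k.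
  by move=> Ux; rewrite rmorphD /= frob_UsetX ?frob_UsetVX // addrC.
have vV := mulfV (Uset_neq0 Uv); have uV := mulfV (Uset_neq0 Uu).
apply: (inv_pairs_codeword Uu Uv s_uniq (frob_sum _ 3 Uv) (frob_sum _ 3 Uu)).
- by rewrite Uset_cube_sum_neq0 // -w0.
- exact: Uset_cube_sum_neq0.
- by rewrite mulrC addrr_pchar2 ?pchar2F.
rewrite !dickson3_pchar2 ?dickson5_pchar2 ?pchar2F //.
by rewrite (dickson_cross_pchar2 pchar2F trace).
Qed.

Lemma exists_weight4_codeword : exists2 c, c \in C & c != 0 /\ wt c = 4%N.
Proof.
have [om [om_root om_frob om2_U]] := cube_root1_frob.
have [u] : exists u, u \in U :\ 1.
  apply/card_gt0P; move: (cardsD1 1 U); rewrite Uset1 card_Uset ?q_gt1 // add1n => -[<-].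
  by rewrite expn_gt0.
rewrite in_setD1 => /andP [u1 Uu].
exact: weight4_codeword_of Uu (mobius_Uset om_root om_frob om2_U Uu) u1
  (mobius_trace om_root om_frob om2_U Uu).
Qed.

End SubfieldSubcode.

Theorem theorem21 (m : nat) (K F : finFieldType) (iota : {rmorphism K -> F}) :
  (4 <= m)%N -> ~~ odd m -> #|K| = (2 ^ m)%N -> #|F| = (2 ^ m * 2 ^ m)%N ->
  let q := (2 ^ m)%N in
  let C := subcode35 iota q in
  [/\ ulen F q = q.+1,
      is_linear_code C,
      code_dim C = (q - 3)%N
    & min_dist_is C 4].
Proof.
move=> m_ge4 m_even cardK cardF q C; split.
- exact: card_Uset cardF (q_gt1 cardK).
- exact: subcode35_linear.
- exact: dim_subcode35.
- by split; [exact: exists_weight4_codeword | exact: wt_subcode35_ge4].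
Qed.
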